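(* Let $N,M,G,H$ be finitely generated groups and let $\alpha\colon N^{(G)}\to M^{(H)}$ and $\beta\colon G\to H$ be maps. Suppose there is $Q\ge0$ such that for all $c_1,c_2\in N^{(G)}$ with $\mathrm{supp}(c_1^{-1}c_2)\subset\{p\}$ for some $p\in G$, one has $\mathrm{supp}(\alpha(c_1)^{-1}\alpha(c_2))\subset B_H(\beta(p),Q)$. Then for every finite subset $A\subset G$ and every $c\in N^{(G)}$, $\alpha(c\,\mathcal L(A))\subset\alpha(c)\,\mathcal L(\beta(A)^{+Q})$.
   Context: Groups carry word metrics from finite generating sets; $B_H(x,r)$ is the closed ball. $N^{(G)}$ is the group of finitely supported maps $G\to N$ with pointwise multiplication; $\mathrm{supp}(c)=\{g:c(g)\ne1_N\}$. For $A\subset G$, $\mathcal L(A)$ is the subgroup of $N^{(G)}$ of colourings supported in $A$ (similarly in $M^{(H)}$). $A^{+Q}$ is the closed $Q$-neighbourhood of $A$. *)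

From Stdlib Require Import List Classical.
Import ListNotations.
Set Implicit Arguments.

Record group := Group {
  carrier :> Type;
  gmul : carrier -> carrier -> carrier;
  ginv : carrier -> carrier;
  gone : carrier;
  gmulA : forall x y z, gmul x (gmul y z) = gmul (gmul x y) z;
  gmul1 : forall x, gmul gone x = x;
  gmulV : forall x, gmul (ginv x) x = gone
}.

Definition eval_word (G : group) (w : list (carrier G * bool)) : carrier G :=
  fold_right (fun (l : carrier G * bool) (acc : carrier G) => gmul G (if snd l then ginv G (fst l) else fst l) acc)
             (gone G) w.

Record fggroup := FGGroup {
  fg_grp :> group;
  gens : list (carrier fg_grp);
  gens_generate : forall x : carrier fg_grp,
      exists w, (forall l, In l w -> In (fst l) gens) /\ eval_word fg_grp w = x
}.

(** Word metric: d(x,y) <= r iff x^{-1} y is a product of at most r letters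
    from S ∪ S^{-1}.  Closed ball B_G(x, r). *)
Definition ball (G : fggroup) (x : carrier G) (r : nat) (y : carrier G) : Prop :=
  exists w, (forall l, In l w -> In (fst l) (gens G)) /\ length w <= r /\
            gmul G x (eval_word G w) = y.

Definition finsupp (G N : fggroup) (c : carrier G -> carrier N) : Prop :=
  exists l : list (carrier G), forall g, c g <> gone N -> In g l.

Definition lamp (N G : fggroup) := { c : carrier G -> carrier N | finsupp G N c }.

Definition col (N G : fggroup) (c : lamp N G) : carrier G -> carrier N := proj1_sig c.
Coercion col : lamp >-> Funclass.

Lemma finsupp_mul (G N : fggroup) (c d : carrier G -> carrier N) :
  finsupp G N c -> finsupp G N d -> finsupp G N (fun g => gmul N (c g) (d g)).
Proof.
  intros [l1 H1] [l2 H2]. exists (l1 ++ l2). intros g Hg. apply in_or_app.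
  destruct (classic (c g = gone N)) as [E|E].
  - right. apply H2. intro E2. apply Hg. rewrite E, E2, gmul1. reflexivity.
  - left. apply H1. exact E.
Qed.

Lemma gmulVr (N : group) (x : carrier N) : gmul N x (ginv N x) = gone N.
Proof.
  transitivity (gmul N (gmul N (ginv N (ginv N x)) (ginv N x))
                       (gmul N x (ginv N x))).
  { rewrite gmulV, gmul1. reflexivity. }
  rewrite <- gmulA, (gmulA N (ginv N x) x (ginv N x)), gmulV, gmul1.
  apply gmulV.
Qed.

Lemma ginv1 (N : group) : ginv N (gone N) = gone N.
Proof.
  rewrite <- (gmul1 N (ginv N (gone N))). apply gmulVr.
Qed.

Lemma finsupp_inv (G N : fggroup) (c : carrier G -> carrier N) :
  finsupp G N c -> finsupp G N (fun g => ginv N (c g)).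
Proof.
  intros [l H]. exists l. intros g Hg. apply H. intro E. apply Hg.
  rewrite E. apply ginv1.
Qed.

Definition lamp_mul (N G : fggroup) (c d : lamp N G) : lamp N G :=
  exist _ (fun g => gmul N (c g) (d g)) (finsupp_mul (proj2_sig c) (proj2_sig d)).
Definition lamp_inv (N G : fggroup) (c : lamp N G) : lamp N G :=
  exist _ (fun g => ginv N (c g)) (finsupp_inv (proj2_sig c)).

Definition supp_in (N G : fggroup) (c : lamp N G) (S : carrier G -> Prop) : Prop :=
  forall g, c g <> gone N -> S g.

Definition L_in (N G : fggroup) (S : carrier G -> Prop) (c : lamp N G) : Prop :=
  supp_in c S.

Definition nbhd (H : fggroup) (S : carrier H -> Prop) (Q : nat) (h : carrier H) : Prop :=
  exists x, S x /\ ball H x Q h.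

Definition img (G H : fggroup) (beta : carrier G -> carrier H) (A : list (carrier G))
  (h : carrier H) : Prop := exists a, In a A /\ beta a = h.

From Stdlib Require Import List Classical ClassicalEpsilon FunctionalExtensionality ProofIrrelevance.

(* Idea: pass from [c] to [c d] by changing the colouring at the points of [A]
   one at a time.  Each single change moves [alpha] only inside a Q-ball around
   [beta a], and the supports of the successive differences
   [alpha(c_i)^-1 alpha(c_(i+1))] accumulate into a union along the chain. *)

Set Implicit Arguments.
Unset Strict Implicit.

Section GroupFacts.
Variable K : group.

Lemma gmul1r (x : carrier K) : gmul K x (gone K) = x.
Proof. rewrite <- (gmulV K x), gmulA, gmulVr, gmul1. reflexivity. Qed.

Lemma gmulK (x y : carrier K) : gmul K (ginv K x) (gmul K x y) = y.
Proof. rewrite gmulA, gmulV, gmul1. reflexivity. Qed.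

Lemma gmulKV (x y : carrier K) : gmul K x (gmul K (ginv K x) y) = y.
Proof. rewrite gmulA, gmulVr, gmul1. reflexivity. Qed.

Lemma gmulV_chain (x y z : carrier K) :
  gmul K (gmul K (ginv K x) y) (gmul K (ginv K y) z) = gmul K (ginv K x) z.
Proof. rewrite <- gmulA, gmulKV. reflexivity. Qed.

Lemma gmulV_eq1 (x y : carrier K) : gmul K (ginv K x) y = gone K -> y = x.
Proof. intro E. rewrite <- (gmulKV x y), E, gmul1r. reflexivity. Qed.

End GroupFacts.

Notation lamp_ldiv c1 c2 := (lamp_mul (lamp_inv c1) c2).

Section Lamps.
Variables N G : fggroup.
Implicit Types (c d : lamp N G) (S T : carrier G -> Prop).

Lemma lamp_ext c d : (forall g, c g = d g) -> c = d.
Proof.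
  destruct c as [c Hc], d as [d Hd]; simpl; intro E.
  assert (c = d) by (apply functional_extensionality; exact E); subst d.
  f_equal; apply proof_irrelevance.
Qed.

Lemma lamp_mulK c d : lamp_ldiv c (lamp_mul c d) = d.
Proof. apply lamp_ext; intro g; apply gmulK. Qed.

Lemma lamp_mulKV c d : lamp_mul c (lamp_ldiv c d) = d.
Proof. apply lamp_ext; intro g; apply gmulKV. Qed.

Lemma supp_in_sub c S T : (forall g, S g -> T g) -> supp_in c S -> supp_in c T.
Proof. intros ST Hc g Hg; apply ST, Hc, Hg. Qed.

Lemma supp_in_ldiv_refl c S : supp_in (lamp_ldiv c c) S.
Proof. intros g Hg; exfalso; apply Hg, gmulV. Qed.

Lemma supp_in_ldiv_nil c d : supp_in (lamp_ldiv c d) (fun _ => False) -> c = d.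
Proof.
  intro Hs; apply lamp_ext; intro g; symmetry; apply gmulV_eq1.
  apply NNPP; exact (Hs g).
Qed.

Lemma supp_in_ldiv_trans c c' d S T :
  supp_in (lamp_ldiv c c') S -> supp_in (lamp_ldiv c' d) T ->
  supp_in (lamp_ldiv c d) (fun g => S g \/ T g).
Proof.
  intros HS HT g Hg; simpl in Hg.
  rewrite <- (gmulV_chain (c g) (c' g) (d g)) in Hg.
  destruct (classic (gmul N (ginv N (c g)) (c' g) = gone N)) as [E|E].
  - rewrite E, gmul1 in Hg; right; exact (HT g Hg).
  - left; exact (HS g E).
Qed.

Definition lamp_patch c d (a : carrier G) : lamp N G.
Proof.
  refine (exist _ (fun g => if excluded_middle_informative (g = a) then d g else c g) _).
  destruct (proj2_sig c) as [l1 H1], (proj2_sig d) as [l2 H2].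
  exists (l1 ++ l2); intros g Hg; apply in_or_app.
  destruct (excluded_middle_informative (g = a)); [right; apply H2 | left; apply H1]; exact Hg.
Defined.

Lemma supp_in_ldiv_patch_l c d a : supp_in (lamp_ldiv c (lamp_patch c d a)) (fun g => g = a).
Proof.
  intros g Hg; simpl in Hg; destruct (excluded_middle_informative (g = a)); auto.
  exfalso; apply Hg, gmulV.
Qed.

Lemma supp_in_ldiv_patch_r c d a S :
  supp_in (lamp_ldiv c d) (fun g => a = g \/ S g) ->
  supp_in (lamp_ldiv (lamp_patch c d a) d) S.
Proof.
  intros Hs g Hg; simpl in Hg; destruct (excluded_middle_informative (g = a)).
  - exfalso; apply Hg, gmulV.
  - destruct (Hs g Hg); [congruence | assumption].
Qed.

End Lamps.

Lemma nbhd_img_cons (G H : fggroup) (beta : carrier G -> carrier H) (Q : nat)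
  (a : carrier G) (A : list (carrier G)) (h : carrier H) :
  ball H (beta a) Q h \/ nbhd H (img G H beta A) Q h ->
  nbhd H (img G H beta (a :: A)) Q h.
Proof.
  intros [Hb | [x [[b [Hb Eb]] Hx]]].
  - exists (beta a); split; [exists a; split; [left|] |]; auto.
  - exists x; split; [exists b; split; [right|] |]; auto.
Qed.

Section LocalAlpha.
Variables N M G H : fggroup.
Variable alpha : lamp N G -> lamp M H.
Variable beta : carrier G -> carrier H.
Variable Q : nat.
Hypothesis hQ : forall (c1 c2 : lamp N G) (p : carrier G),
  supp_in (lamp_ldiv c1 c2) (fun g => g = p) ->
  supp_in (lamp_ldiv (alpha c1) (alpha c2)) (ball H (beta p) Q).

Lemma supp_in_ldiv_alpha (A : list (carrier G)) (c1 c2 : lamp N G) :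
  supp_in (lamp_ldiv c1 c2) (fun g => In g A) ->
  supp_in (lamp_ldiv (alpha c1) (alpha c2)) (nbhd H (img G H beta A) Q).
Proof.
  revert c1 c2; induction A as [|a A IH]; intros c1 c2 Hs.
  - rewrite (supp_in_ldiv_nil Hs); apply supp_in_ldiv_refl.
  - apply (supp_in_sub (@nbhd_img_cons G H beta Q a A)).
    apply supp_in_ldiv_trans with (alpha (lamp_patch c1 c2 a)).
    + apply hQ, supp_in_ldiv_patch_l.
    + apply IH, supp_in_ldiv_patch_r, Hs.
Qed.

End LocalAlpha.

Theorem lemma3p6 (N M G H : fggroup)
  (alpha : lamp N G -> lamp M H) (beta : carrier G -> carrier H) (Q : nat)
  (hQ : forall (c1 c2 : lamp N G) (p : carrier G),
      supp_in (lamp_mul (lamp_inv c1) c2) (fun g => g = p) ->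
      supp_in (lamp_mul (lamp_inv (alpha c1)) (alpha c2)) (ball H (beta p) Q)) :
  forall (A : list (carrier G)) (c : lamp N G) (d : lamp N G),
    L_in (fun g => In g A) d ->
    exists e : lamp M H,
      L_in (nbhd H (img G H beta A) Q) e /\ alpha (lamp_mul c d) = lamp_mul (alpha c) e.
Proof.
  intros A c d Hd.
  exists (lamp_ldiv (alpha c) (alpha (lamp_mul c d))); split.
  - apply (supp_in_ldiv_alpha hQ); rewrite lamp_mulK; exact Hd.
  - symmetry; apply lamp_mulKV.
Qed.
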